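(* Let $k\ge 2$ and let $A_k$ be the $k\times k^2$ array whose entry in row $r$ and column $j=sk+c$ (with $0\le r,s,c\le k-1$) is $(s+rc)\bmod k$. Suppose that at two distinct L-positions of $A_k$ the L-fillings read are $(a,b,d_1)$ and $(a,b,d_2)$ respectively (same $a$ and same $b$). Then the cells containing $d_1$ and $d_2$ lie in different rows (equivalently, the two cells containing $a$ lie in different rows).
   Context: Array indices are cyclic: rows mod $k$, columns mod $k^2$. Every column index $j\in\{0,\dots,k^2-1\}$ is written uniquely as $j=sk+c$ with $0\le s,c\le k-1$; $s$ is the square number and $c$ the column number (within the square). An L-position is a pair $(i,j)$, and the L-filling read at $(i,j)$ is the triple $(A(i,j),\,A(i+1 \bmod k,\,j),\,A(i+1 \bmod k,\,j+1 \bmod k^2))$: the upper-left cell $a$, the cell $b$ directly below it, and the cell $d$ directly to the right of $b$. Two L-positions are distinct if they differ as pairs $(i,j)$. *)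

From mathcomp Require Import all_boot.
Set Implicit Arguments. Unset Strict Implicit. Unset Printing Implicit Defensive.

Definition Ak (k r j : nat) : nat := (j %/ k + r * (j %% k)) %% k.

Definition Lfill (k i j : nat) : nat * nat * nat :=
  (Ak k i j, Ak k (i.+1 %% k) j, Ak k (i.+1 %% k) (j.+1 %% (k ^ 2))).

From mathcomp Require Import all_boot.
From mathcomp Require Import zify.

(* Moving one row down adds the column number c
   (mod k) to an entry.  Hence the two vertically adjacent entries a (row r)
   and b (row r+1) of a column determine c = b - a (mod k), and then a
   determines s = a - r*c (mod k): within a fixed pair of consecutive rows,
   the vertical pair (a, b) occurs in at most one column.  If the cells of
   d1 and d2 were in the same row (i1+1 = i2+1 mod k), the two L-positions
   would lie in the same row (successor is injective mod k), and the common
   pair (a, b) would force j1 = j2, contradicting distinctness. *)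

Lemma succ_mod_inj (k i1 i2 : nat) :
  i1 < k -> i2 < k -> i1.+1 %% k = i2.+1 %% k -> i1 = i2.
Proof.
move=> hi1 hi2.
have succ_mod (i : nat) : i < k -> i.+1 %% k = if i.+1 == k then 0 else i.+1.
  move=> hi; case: eqP => [->|ne]; first by rewrite modnn.
  by rewrite modn_small; lia.
rewrite !succ_mod //; do 2 case: eqP; lia.
Qed.

Lemma Ak_next (k i j : nat) :
  Ak k (i.+1 %% k) j = (Ak k i j + j %% k) %% k.
Proof.
rewrite /Ak modnDml -modnDmr modnMml modnDmr mulSn; congr (_ %% _); lia.
Qed.

(* The entry of a cell and of the cell below it determine its column
   number: c = b - a (mod k). *)
Lemma Ak_pair_col (k i j1 j2 : nat) :
  Ak k i j1 = Ak k i j2 ->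
  Ak k (i.+1 %% k) j1 = Ak k (i.+1 %% k) j2 ->
  j1 %% k = j2 %% k.
Proof.
rewrite !Ak_next => -> /eqP.
by rewrite -modnDml -[in X in _ == X]modnDml eqn_modDl !modn_mod => /eqP.
Qed.

(* Within two consecutive rows of A_k, a vertical pair of entries occurs in
   at most one column: it determines c, and then the square number s. *)
Lemma Ak_pair_inj (k i j1 j2 : nat) :
  j1 < k ^ 2 -> j2 < k ^ 2 ->
  Ak k i j1 = Ak k i j2 ->
  Ak k (i.+1 %% k) j1 = Ak k (i.+1 %% k) j2 ->
  j1 = j2.
Proof.
move=> hj1 hj2 ha hb.
have hc : j1 %% k = j2 %% k by exact: Ak_pair_col ha hb.
have square_lt (j : nat) : j < k ^ 2 -> j %/ k < k.
  by move=> hj; rewrite ltn_divLR; lia.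
have hs : j1 %/ k = j2 %/ k.
  move/eqP: ha; rewrite /Ak hc eqn_modDr.
  by rewrite !modn_small ?square_lt // => /eqP.
by rewrite (divn_eq j1 k) (divn_eq j2 k) hc hs.
Qed.

Theorem lemma2 (k : nat) (hk : 2 <= k)
  (i1 j1 i2 j2 a b d1 d2 : nat)
  (hi1 : i1 < k) (hj1 : j1 < k ^ 2) (hi2 : i2 < k) (hj2 : j2 < k ^ 2)
  (hdist : (i1, j1) <> (i2, j2))
  (hL1 : Lfill k i1 j1 = (a, b, d1))
  (hL2 : Lfill k i2 j2 = (a, b, d2)) :
  i1.+1 %% k <> i2.+1 %% k.
Proof.
move=> same_row.
have ei : i1 = i2 by exact: succ_mod_inj hi1 hi2 same_row.
subst i2.
case: hL1 => ha1 hb1 _; case: hL2 => ha2 hb2 _.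
apply: hdist; congr (_, _).
apply: (Ak_pair_inj k i1) => //.
- by rewrite ha1 ha2.
- by rewrite hb1 hb2.
Qed.
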